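(* Let $\mathbb{K}$ be a field, $n>1$, $a=\sum_{j=0}^d c_j s^j\in\mathbb{K}[s]^n$ a non-zero row vector of degree $d$, and $A\in\mathbb{K}^{(2d+1)\times n(d+1)}$ the matrix whose $(i,\,kn+r)$ entry ($1\le i\le 2d+1$, $0\le k\le d$, $1\le r\le n$) is the $r$-th entry of $c_{i-1-k}$ (zero if $i-1-k\notin\{0,\dots,d\}$). With $\tilde q$ and $b_r$ as in the context, the leading vectors $LV(b_r^\flat)$, $r\in\tilde q$, are linearly independent over $\mathbb{K}$.
   Context: A column of a matrix is pivotal if it is either the first column and non-zero, or linearly independent of all previous columns; otherwise non-pivotal. $p$ is the set of pivotal indices of $A$, $q$ the set of non-pivotal indices, and $\tilde q=\{\min\varrho\mid\varrho\in q/(n)\}$ the basic non-pivotal indices. For $i\in q$ write uniquely $A_{*i}=\sum_{\{j\in p\mid j<i\}}\alpha^{(i)}_jA_{*j}$ and set $b_i=e_i-\sum_{\{j\in p\mid j<i\}}\alpha^{(i)}_je_j$. For $v=[w_0;\dots;w_d]\in\mathbb{K}^{n(d+1)}$ ($w_i\in\mathbb{K}^n$), $v^\flat=\sum_i s^iw_i$. For non-zero $h\in\mathbb{K}[s]^n$ with $t=\deg(h)=\max_i\deg(h_i)$, $LV(h)\in\mathbb{K}^n$ is the vector of coefficients of $s^t$ in $h_1,\dots,h_n$. *)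

From HB Require Import structures.
From mathcomp Require Import all_boot all_order all_algebra.
Set Implicit Arguments. Unset Strict Implicit. Unset Printing Implicit Defensive.
Import Order.TTheory GRing.Theory Num.Theory.
Local Open Scope ring_scope.

(* All indices are 0-based: the paper's row i (1..2d+1) is our i-1, the
   paper's column k*n + r (r in 1..n) is our k*n + (r-1). *)

Section Defs.
Variable K : fieldType.

(* The matrix A of the statement built from a = sum_j c_j s^j, where
   (c_j)_r = (a_r)`_j. Entry (i, k*n+r) = (c_{i-k})_r, zero if i-k not in 0..d. *)
Definition sylA (n d : nat) (a : 'rV[{poly K}]_n) : 'M[K]_(2 * d + 1, n * d.+1) :=
  \matrix_(i < 2 * d + 1, j < n * d.+1)
    let k := (j %/ n)%N in
    let r := (j %% n)%N in
    if (k <= i)%N && (i - k <= d)%N then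
      (if insub r is Some r' then (a ord0 r')`_(i - k) else 0)
    else 0.

Definition pivotal (m N : nat) (A : 'M[K]_(m, N)) (j : 'I_N) : bool :=
  ~~ (row j A^T <= \sum_(j' < N | (j' < j)%N) <<row j' A^T>>)%MS.

(* basic non-pivotal indices: minima of the classes of q modulo n *)
Definition basic_nonpivotal (n m N : nat) (A : 'M[K]_(m, N)) (r : 'I_N) : bool :=
  ~~ pivotal A r &&
  [forall r' : 'I_N, ((r' < r)%N && (r' == r %[mod n])) ==> pivotal A r'].

Definition bvec (m N : nat) (A : 'M[K]_(m, N)) (alpha : 'I_N -> 'I_N -> K)
    (i : 'I_N) : 'cV[K]_N :=
  delta_mx i 0 - \sum_(j < N | pivotal A j && (j < i)%N) alpha i j *: delta_mx j 0.

(* entry m of a vector of length N (0 if out of range) *)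
Definition vget (N : nat) (v : 'cV[K]_N) (m : nat) : K :=
  if insub m is Some j then v j 0 else 0.

Definition flat (n d : nat) (v : 'cV[K]_(n * d.+1)) : 'rV[{poly K}]_n :=
  \row_(r < n) \poly_(k < d.+1) vget v (k * n + r).

Definition pdeg (n : nat) (h : 'rV[{poly K}]_n) : nat :=
  \max_(i < n) (size (h ord0 i)).-1.

Definition LV (n : nat) (h : 'rV[{poly K}]_n) : 'rV[K]_n :=
  \row_(i < n) (h ord0 i)`_(pdeg h).

End Defs.

Arguments sylA {K n} d a.
Arguments pivotal {K m N} A j.
Arguments basic_nonpivotal {K} n {m N} A r.
Arguments bvec {K m N} A alpha i.
Arguments flat {K n d} v.
Arguments pdeg {K n} h.
Arguments LV {K n} h.

From HB Require Import structures.
From mathcomp Require Import all_boot all_order all_algebra zify.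
Import Order.TTheory GRing.Theory Num.Theory.
Local Open Scope ring_scope.

(* b_r is unitriangular: its last non-zero entry is a 1 in position r. Hence
   b_r^flat has degree r %/ n and LV(b_r^flat) has a 1 in position r %% n and
   zeros after it. Two basic non-pivotal indices never share a residue mod n,
   so these leading vectors are in echelon form and therefore free. Nothing
   else about A, a or alpha is needed. *)

Lemma free_echelon (K : fieldType) (n : nat) (I : eqType) (e : seq I)
    (f : I -> 'rV[K]_n) (rho : I -> 'I_n) :
  uniq e -> {in e &, injective rho} ->
  (forall x, x \in e -> f x 0 (rho x) != 0) ->
  (forall x (c : 'I_n), x \in e -> (rho x < c)%N -> f x 0 c = 0) ->
  free (map f e).
Proof.
move=> uniq_e inj_rho f_piv f_after.
case: e => [|x0 e'] in uniq_e inj_rho f_piv f_after *; first exact: nil_free.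
set e := x0 :: e' in uniq_e inj_rho f_piv f_after *.
apply/(@freeP _ _ _ (in_tuple (map f e))) => k k_rel.
have sz : size (map f e) = size e by rewrite size_map.
have nth_e (t : 'I_(size (map f e))) : nth x0 e t \in e by rewrite mem_nth -?sz.
have nth_f (t : 'I_(size (map f e))) : (map f e)`_t = f (nth x0 e t).
  by rewrite (nth_map x0) -?sz.
case: (pickP (fun t => k t != 0)) => [t0 kt0_neq0 | k_eq0]; last first.
  by move=> t; apply/eqP/negbFE/k_eq0.
pose R (t : 'I_(size (map f e))) : nat := rho (nth x0 e t).
(* take the non-zero coefficient whose pivot is rightmost: in that column
   every other vector of the combination vanishes *)
case: (@arg_maxnP _ t0 (fun t => k t != 0) R kt0_neq0) => tm ktm_neq0 tm_max.
have := congr1 (fun v : 'rV_n => v 0 (rho (nth x0 e tm))) k_rel.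
rewrite /= summxE (bigD1 tm) //= big1 ?addr0 => [|t t_neq_tm].
  by rewrite !mxE nth_f => /eqP; rewrite mulf_eq0 (negbTE ktm_neq0) (negbTE (f_piv _ _)).
rewrite !mxE nth_f; have [->|kt_neq0] := eqVneq (k t) 0; first by rewrite mul0r.
have le_t_tm : (R t <= R tm)%N := tm_max t kt_neq0.
rewrite f_after ?mulr0 // ltn_neqAle le_t_tm andbT.
apply: contra t_neq_tm => /eqP/val_inj/(inj_rho _ _ (nth_e t) (nth_e tm)) eq_nth.
by rewrite -(inj_eq val_inj) -(nth_uniq x0 _ _ uniq_e) -?sz //= eq_nth.
Qed.

Section BvecUnitriangular.
Variables (K : fieldType) (m N : nat) (A : 'M[K]_(m, N)) (alpha : 'I_N -> 'I_N -> K).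

Lemma bvec_coef (i j : 'I_N) : (i <= j)%N -> bvec A alpha i j 0 = (i == j)%:R.
Proof.
move=> le_ij; rewrite /bvec !mxE summxE big1 ?subr0 ?andbT 1?eq_sym // => k /andP[_ lt_ki].
by rewrite !mxE -val_eqE gtn_eqF ?mulr0 // (leq_trans lt_ki).
Qed.

Lemma vget_bvec (i : 'I_N) (c : nat) :
  (i <= c)%N -> vget (bvec A alpha i) c = (i == c :> nat)%:R.
Proof.
rewrite /vget; case: insubP => [j _ <- /bvec_coef -> //|].
by rewrite -leqNgt => le_Nc _; rewrite ltn_eqF // (leq_trans (ltn_ord i)).
Qed.

End BvecUnitriangular.

Section LeadingVector.
Variables (K : fieldType) (n d m : nat) (A : 'M[K]_(m, n * d.+1)).
Variables (alpha : 'I_(n * d.+1) -> 'I_(n * d.+1) -> K) (i : 'I_(n * d.+1)).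
Hypothesis n_gt0 : (0 < n)%N.

Let i_div_lt : (i %/ n < d.+1)%N.
Proof. by rewrite ltn_divLR // [(_ * n)%N]mulnC. Qed.

Lemma pdeg_flat_bvec : pdeg (flat (bvec A alpha i)) = (i %/ n)%N.
Proof.
have i_eq := divn_eq i n; have i_mod_lt := ltn_pmod i n_gt0.
apply/eqP; rewrite eqn_leq; apply/andP; split.
  apply/bigmax_leqP => c _; rewrite mxE -subn1 leq_subLR add1n.
  apply/leq_sizeP => k lt_k.
  rewrite coef_poly; case: ifP => // _; rewrite vget_bvec; last by nia.
  by rewrite ltn_eqF //; nia.
apply: leq_trans (leq_bigmax (Ordinal i_mod_lt)) => /=.
rewrite mxE -ltnS; apply: leq_trans (leqSpred _); rewrite ltnNge.
apply/negP => /leq_sizeP/(_ _ (leqnn _)).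
by rewrite coef_poly i_div_lt /= -i_eq vget_bvec // eqxx => /eqP; rewrite oner_eq0.
Qed.

Lemma LV_flat_bvec (c : 'I_n) :
  (i %% n <= c)%N -> LV (flat (bvec A alpha i)) 0 c = ((i %% n)%N == c)%:R.
Proof.
move=> le_c; have i_eq := divn_eq i n.
rewrite !mxE pdeg_flat_bvec coef_poly i_div_lt vget_bvec; last by lia.
by congr (_%:R); apply/eqP/eqP; lia.
Qed.

End LeadingVector.

Lemma basic_nonpivotal_modn_inj (K : fieldType) (n m N : nat) (A : 'M[K]_(m, N)) :
  {in basic_nonpivotal n A &, injective (fun r : 'I_N => (r %% n)%N)}.
Proof.
suff no_earlier (x y : 'I_N) : basic_nonpivotal n A x -> basic_nonpivotal n A y ->
    (x %% n = y %% n)%N -> ~ (x < y)%N.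
  move=> x y bx b_y eq_xy; case: (ltngtP x y) => [lt_xy|lt_yx|/val_inj //].
  - by case: (no_earlier x y bx b_y eq_xy lt_xy).
  - by case: (no_earlier y x b_y bx (esym eq_xy) lt_yx).
move=> /andP[npx _] /andP[_ /forallP/(_ x)] + eq_xy lt_xy.
by rewrite lt_xy eq_xy eqxx (negbTE npx).
Qed.

Theorem lemma10 (K : fieldType) (n d : nat) (a : 'rV[{poly K}]_n)
    (alpha : 'I_(n * d.+1) -> 'I_(n * d.+1) -> K) :
  (1 < n)%N ->
  a != 0 ->
  pdeg a = d ->
  (forall i : 'I_(n * d.+1), ~~ pivotal (sylA d a) i ->
     col i (sylA d a) =
     \sum_(j < n * d.+1 | pivotal (sylA d a) j && (j < i)%N) alpha i j *: col j (sylA d a)) ->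
  free [seq LV (flat (bvec (sylA d a) alpha r))
       | r <- enum (basic_nonpivotal n (sylA d a))].
Proof.
move=> n_gt1 _ _ _; have n_gt0 : (0 < n)%N by apply: ltn_trans n_gt1.
apply: (@free_echelon _ _ _ _ _ (fun r : 'I_(n * d.+1) => Ordinal (ltn_pmod r n_gt0))).
- exact: enum_uniq.
- move=> x y; rewrite !mem_enum => bx b_y /(congr1 val) /=.
  exact: (@basic_nonpivotal_modn_inj K n _ _ (sylA d a) x y bx b_y).
- by move=> r _; rewrite LV_flat_bvec ?leqnn ?eqxx ?oner_eq0.
- by move=> r c _ lt_c; rewrite LV_flat_bvec ?(ltnW lt_c) ?(ltn_eqF lt_c).
Qed.
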